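(* Let $\mathcal{R}$ be a left-connected rewriting system over a signature $\Sigma$, let $L_i,L_j$ be left-hand sides of rules of $\mathcal{R}$, and let $S_{ij\gamma}$ (with $\epsilon_{ij\gamma}\colon L_i+L_j\to S_{ij\gamma}$) be a hyperedge gluing and $S_{ij\gamma'}$ (with $\epsilon_{ij\gamma'}\colon S_{ij\gamma}\to S_{ij\gamma'}$) a subsequent node gluing, as described below, such that $S_{ij\gamma'}$ yields a critical pair. Then for every left-hand side $L$ of a rule of $\mathcal{R}$ and every convex match $m\colon L\to S_{ij\gamma}$ (into the ma-cospan $in(S_{ij\gamma})\to S_{ij\gamma}\leftarrow out(S_{ij\gamma})$), the composite $m;\epsilon_{ij\gamma'}\colon L\to S_{ij\gamma'}$ is a convex match (into the ma-cospan $in(S_{ij\gamma'})\to S_{ij\gamma'}\leftarrow out(S_{ij\gamma'})$).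
   Context: A signature $\Sigma$ is a set of triples $(x,n,m)$ (label, arity, coarity). A $\Sigma$-hypergraph $G=(V,E,s,t,l)$ has finite sets $V$ (nodes), $E$ (hyperedges), maps $s,t\colon E\to V^*$ (lists of sources/targets) and a labelling $l\colon E\to\Sigma$ sending a hyperedge with $n$ sources and $m$ targets to some $(x,n,m)$. Morphisms preserve sources, targets and labels; they form the category $\mathbf{Hyp}_\Sigma$, where colimits are computed componentwise and monos/epis are injective/surjective on nodes and hyperedges. Composition is written $f;g$; $\iota_1,\iota_2$ are coprojections. A hypergraph is discrete if it has no hyperedges. A path is a list of hyperedges $[e_1,\dots,e_n]$ with some target of $e_k$ equal to a source of $e_{k+1}$ for each $k$; it goes from $v$ to $v'$ if $v$ is a source of $e_1$ and $v'$ a target of $e_n$; a cycle is a path with some source of $e_1$ a target of $e_n$. In-degree (out-degree) of a node $v$: number of pairs $(e,i)$ with $v$ the $i$-th target (source) of $e$; $in(H)$, $out(H)$: nodes of in-degree $0$, out-degree $0$. $H$ is ma (monogamous acyclic) if it has no cycle and all in- and out-degrees are $\le 1$. A cospan $I\to H\leftarrow O$ with $I,O$ discrete is an ma-cospan if $H$ is ma and the legs are mono with images $in(H)$ and $out(H)$. $H$ is strongly connected if for all $x\in in(H)$, $y\in out(H)$ there is a path from $x$ to $y$. A left-connected rule is a span $L\xleftarrow{[i_L,o_L]}K=I+O\xrightarrow{[i_R,o_R]}R$ with $I,O$ discrete, $I\to L\leftarrow O$, $I\to R\leftarrow O$ ma-cospans, $[i_L,o_L]$ mono, $L$ strongly connected;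 a left-connected rewriting system is a finite set of such rules. A convex match is a mono $m\colon L\to G$ such that for any nodes $v,v'$ of $m(L)$ and any path in $G$ from $v$ to $v'$, all hyperedges of the path lie in $m(L)$; for left-connected systems it is known that every mono match of a left-hand side is convex. Derivations between ma-cospans are given by a rule, a convex match and a double pushout diagram commuting with the interface. A pre-critical pair is a pair of derivations from a common ma-cospan $n\to S\leftarrow m$ with matches $m_1\colon L_i\to S$, $m_2\colon L_j\to S$ such that $[m_1,m_2]$ is epi; it is parallel if $m_1$ factors through the pushout complement $C_2\to S$ of the second derivation and $m_2$ through the pushout complement $C_1\to S$ of the first; critical if not parallel. Hyperedge gluing: let $M$ be a nonempty set of pairs $(e,e')$, $e$ a hyperedge of $L_i$, $e'$ of $L_j$, with equal labels, no hyperedge in two pairs; $\gamma$ has hyperedges $M$ and nodes the pairs $(v,v')$ that are $k$-th sources (or $k$-th targets) of $e,e'$ for some $(e,e')\in M$ and $k$, with projections $p_1^\gamma\colon\gamma\to L_i$, $p_2^\gamma\colon\gamma\to L_j$; $\epsilon_{ij\gamma}\colon L_i+L_j\to S_{ij\gamma}$ is the coequaliser of $p_1^\gamma;\iota_1$ and $p_2^\gamma;\iota_2$. Node gluing: with $I_1=in(S_{ij\gamma})\cap\epsilon_{ij\gamma}(\iota_1(in(L_i)))$, $I_2=in(S_{ij\gamma})\cap\epsilon_{ij\gamma}(\iota_2(in(L_j)))$, $O_1=out(S_{ij\gamma})\cap\epsilon_{ij\gamma}(\iota_1(out(L_i)))$, $O_2=out(S_{ij\gamma})\cap\epsilon_{ij\gamma}(\iota_2(out(L_j)))$,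 let $N$ be a set of pairs in $I_1\times O_2$, or in $I_2\times O_1$, with no element in two pairs; $\gamma'$ is the discrete hypergraph with nodes $N$ and projections $p_1^{\gamma'},p_2^{\gamma'}\colon\gamma'\to S_{ij\gamma}$; $\epsilon_{ij\gamma'}\colon S_{ij\gamma}\to S_{ij\gamma'}$ is their coequaliser. $S_{ij\gamma'}$ yields a critical pair if the matches $\iota_k;\epsilon_{ij\gamma};\epsilon_{ij\gamma'}$ ($k=1,2$) are mono, $in(S_{ij\gamma'})\xrightarrow{\subseteq}S_{ij\gamma'}\xleftarrow{\subseteq}out(S_{ij\gamma'})$ is an ma-cospan, and the derivations from it with these matches form a critical pair. *)

From Stdlib Require List.
From HB Require Import structures.
From mathcomp Require Import ssreflect ssrfun ssrbool eqtype ssrnat seq path choice fintype finfun bigop finset.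
Set Implicit Arguments. Unset Strict Implicit. Unset Printing Implicit Defensive.

(* A signature: a type of labels, each carrying an arity and a coarity.
   (A label of the signature is a triple (x,n,m); sarity/scoarity give n,m.) *)
Record signature := Signature {
  slabel : Type; sarity : slabel -> nat; scoarity : slabel -> nat }.

Section Hyp.
Variable Sg : signature.

Record hypergraph := Hypergraph {
  hV : finType; hE : finType;
  hsrc : hE -> seq hV; htgt : hE -> seq hV; hlab : hE -> slabel Sg }.

Definition wf_hg (G : hypergraph) : Prop :=
  forall e : hE G, size (hsrc e) = sarity (hlab e) /\ size (htgt e) = scoarity (hlab e).

Record hom (G H : hypergraph) := Hom { mV : hV G -> hV H; mE : hE G -> hE H }.

Definition is_hom G H (f : hom G H) : Prop :=
  (forall e, hsrc (mE f e) = map (mV f) (hsrc e)) /\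
  (forall e, htgt (mE f e) = map (mV f) (htgt e)) /\
  (forall e, hlab (mE f e) = hlab e).

(* composition in diagrammatic order: hcomp f g = f;g *)
Definition hcomp G H K (f : hom G H) (g : hom H K) : hom G K :=
  Hom (mV g \o mV f) (mE g \o mE f).

Definition homeq G H (f g : hom G H) : Prop := mV f =1 mV g /\ mE f =1 mE g.

Definition mono G H (f : hom G H) : Prop := injective (mV f) /\ injective (mE f).
Definition epi G H (f : hom G H) : Prop :=
  (forall y, exists x, mV f x = y) /\ (forall y, exists x, mE f x = y).

Definition discrete (G : hypergraph) : Prop := #|hE G| = 0.

Definition hsum (G H : hypergraph) : hypergraph :=
  @Hypergraph (hV G + hV H)%type (hE G + hE H)%type
    (fun e => match e with inl e => map inl (hsrc e) | inr e => map inr (hsrc e) end)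
    (fun e => match e with inl e => map inl (htgt e) | inr e => map inr (htgt e) end)
    (fun e => match e with inl e => hlab e | inr e => hlab e end).

Definition iota1 G H : hom G (hsum G H) := @Hom G (hsum G H) (@inl _ _) (@inl _ _).
Definition iota2 G H : hom H (hsum G H) := @Hom H (hsum G H) (@inr _ _) (@inr _ _).
Definition copair G H K (f : hom G K) (g : hom H K) : hom (hsum G H) K :=
  @Hom (hsum G H) K (fun (v : hV G + hV H) => match v with inl v => mV f v | inr v => mV g v end)
      (fun (e : hE G + hE H) => match e with inl e => mE f e | inr e => mE g e end).

Definition is_coequalizer A B Q (f g : hom A B) (q : hom B Q) : Prop :=
  is_hom q /\ homeq (hcomp f q) (hcomp g q) /\
  forall X : hypergraph, wf_hg X -> forall h : hom B X, is_hom h ->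
    homeq (hcomp f h) (hcomp g h) ->
    exists u : hom Q X, is_hom u /\ homeq (hcomp q u) h /\
      forall u' : hom Q X, is_hom u' -> homeq (hcomp q u') h -> homeq u' u.

(* square  A -f-> B -g'-> D  =  A -g-> C -f'-> D  is a pushout *)
Definition is_pushout A B C D (f : hom A B) (g : hom A C) (f' : hom C D) (g' : hom B D)
  : Prop :=
  is_hom f' /\ is_hom g' /\ homeq (hcomp f g') (hcomp g f') /\
  forall X : hypergraph, wf_hg X -> forall (h : hom B X) (k : hom C X),
    is_hom h -> is_hom k -> homeq (hcomp f h) (hcomp g k) ->
    exists u : hom D X, is_hom u /\ homeq (hcomp g' u) h /\ homeq (hcomp f' u) k /\
      forall u' : hom D X, is_hom u' -> homeq (hcomp g' u') h -> homeq (hcomp f' u') k ->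
        homeq u' u.

Definition indeg (G : hypergraph) (v : hV G) : nat :=
  \sum_(e : hE G) count (pred1 v) (htgt e).
Definition outdeg (G : hypergraph) (v : hV G) : nat :=
  \sum_(e : hE G) count (pred1 v) (hsrc e).

Definition linked (G : hypergraph) (e e' : hE G) : bool :=
  has (fun v => v \in hsrc e') (htgt e).

Definition path_from_to (G : hypergraph) (v v' : hV G) (p : seq (hE G)) : bool :=
  match p with
  | [::] => false
  | e :: p' => [&& path (@linked G) e p', v \in hsrc e & v' \in htgt (last e p')]
  end.

Definition is_cycle (G : hypergraph) (p : seq (hE G)) : bool :=
  match p with
  | [::] => false
  | e :: p' => path (@linked G) e p' && has (fun v => v \in hsrc e) (htgt (last e p'))
  end.

Definition ma (G : hypergraph) : Prop :=
  (forall p : seq (hE G), ~~ is_cycle p) /\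
  (forall v : hV G, indeg v <= 1 /\ outdeg v <= 1).

Definition ma_cospan I O H (i : hom I H) (o : hom O H) : Prop :=
  discrete I /\ discrete O /\ ma H /\ is_hom i /\ is_hom o /\ mono i /\ mono o /\
  (forall v, (exists x, mV i x = v) <-> indeg v = 0) /\
  (forall v, (exists x, mV o x = v) <-> outdeg v = 0).

Definition strongly_connected (H : hypergraph) : Prop :=
  forall x y : hV H, indeg x = 0 -> outdeg y = 0 -> exists p, path_from_to x y p.

Definition disc (T : finType) : hypergraph :=
  @Hypergraph T void (fun e => of_void _ e) (fun e => of_void _ e)
    (fun e => of_void _ e).

Definition in_disc (G : hypergraph) : hypergraph :=
  disc {v : hV G | indeg v == 0}.
Definition out_disc (G : hypergraph) : hypergraph :=
  disc {v : hV G | outdeg v == 0}.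
Definition incl_in (G : hypergraph) : hom (in_disc G) G :=
  @Hom (in_disc G) G (fun v : {v : hV G | indeg v == 0} => val v) (fun e : void => of_void _ e).
Definition incl_out (G : hypergraph) : hom (out_disc G) G :=
  @Hom (out_disc G) G (fun v : {v : hV G | outdeg v == 0} => val v) (fun e : void => of_void _ e).

Record rule := Rule {
  rI : hypergraph; rO : hypergraph; rL : hypergraph; rR : hypergraph;
  riL : hom rI rL; roL : hom rO rL; riR : hom rI rR; roR : hom rO rR }.

Definition left_connected_rule (r : rule) : Prop :=
  wf_hg (rI r) /\ wf_hg (rO r) /\ wf_hg (rL r) /\ wf_hg (rR r) /\
  discrete (rI r) /\ discrete (rO r) /\
  ma_cospan (riL r) (roL r) /\ ma_cospan (riR r) (roR r) /\
  mono (copair (riL r) (roL r)) /\ strongly_connected (rL r).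

Definition left_connected_system (Rs : seq rule) : Prop :=
  forall r, List.In r Rs -> left_connected_rule r.

Definition convex_match L G (m : hom L G) : Prop :=
  is_hom m /\ mono m /\
  forall (v v' : hV G) (p : seq (hE G)),
    (exists x, mV m x = v) -> (exists x, mV m x = v') -> path_from_to v v' p ->
    forall e, e \in p -> exists d, mE m d = e.

Record derivation N M G (i : hom N G) (o : hom M G) (r : rule) (mt : hom (rL r) G) :=
  Derivation {
    d_C : hypergraph; d_k : hom (hsum (rI r) (rO r)) d_C; d_f : hom d_C G;
    d_H : hypergraph; d_g : hom d_C d_H; d_kR : hom (rR r) d_H;
    d_c : hom (hsum N M) d_C; d_iH : hom N d_H; d_oH : hom M d_H }.
Arguments derivation [N M G] i o r mt.

Definition is_derivation N M G (i : hom N G) (o : hom M G) r mt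
  (d : derivation i o r mt) : Prop :=
  wf_hg (d_C d) /\ wf_hg (d_H d) /\ convex_match mt /\
  is_hom (d_k d) /\ is_hom (d_c d) /\
  is_pushout (copair (riL r) (roL r)) (d_k d) (d_f d) mt /\
  is_pushout (copair (riR r) (roR r)) (d_k d) (d_g d) (d_kR d) /\
  homeq (hcomp (d_c d) (d_f d)) (copair i o) /\
  homeq (hcomp (d_c d) (d_g d)) (copair (d_iH d) (d_oH d)) /\
  ma_cospan (d_iH d) (d_oH d).

Definition pre_critical N M G (i : hom N G) (o : hom M G) r1 r2 m1 m2
  (d1 : derivation i o r1 m1) (d2 : derivation i o r2 m2) : Prop :=
  ma_cospan i o /\ is_derivation d1 /\ is_derivation d2 /\ epi (copair m1 m2).

Definition parallel N M G (i : hom N G) (o : hom M G) r1 r2 m1 m2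
  (d1 : derivation i o r1 m1) (d2 : derivation i o r2 m2) : Prop :=
  (exists h : hom (rL r1) (d_C d2), is_hom h /\ homeq (hcomp h (d_f d2)) m1) /\
  (exists h : hom (rL r2) (d_C d1), is_hom h /\ homeq (hcomp h (d_f d1)) m2).

Definition critical N M G (i : hom N G) (o : hom M G) r1 r2 m1 m2
  (d1 : derivation i o r1 m1) (d2 : derivation i o r2 m2) : Prop :=
  pre_critical d1 d2 /\ ~ parallel d1 d2.

Section EdgeGluing.
Variables (Li Lj : hypergraph) (M : {set (hE Li * hE Lj)}).

Definition edge_gluing_cond : Prop :=
  M != set0 /\
  (forall ee, ee \in M -> hlab ee.1 = hlab ee.2) /\
  (forall ee ee', ee \in M -> ee' \in M -> (ee.1 = ee'.1 \/ ee.2 = ee'.2) -> ee = ee').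

(* (v,v') is a node of gamma iff it is the k-th source (or k-th target) pair of some
   (e,e') in M, i.e. it occurs in the zip of their source (target) lists *)
Definition gnode (p : hV Li * hV Lj) : bool :=
  [exists ee in M, (p \in zip (hsrc ee.1) (hsrc ee.2)) ||
                   (p \in zip (htgt ee.1) (htgt ee.2))].
Definition gedge (ee : hE Li * hE Lj) : bool := ee \in M.

Definition gammaV : finType := {p : hV Li * hV Lj | gnode p}.
Definition gammaE : finType := {ee : hE Li * hE Lj | gedge ee}.

Definition gamma : hypergraph :=
  @Hypergraph gammaV gammaE
    (fun ee => pmap insub (zip (hsrc (val ee).1) (hsrc (val ee).2)))
    (fun ee => pmap insub (zip (htgt (val ee).1) (htgt (val ee).2)))
    (fun ee => hlab (val ee).1).

Definition gamma_p1 : hom gamma Li :=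
  @Hom gamma Li (fun p : gammaV => (val p).1) (fun ee : gammaE => (val ee).1).
Definition gamma_p2 : hom gamma Lj :=
  @Hom gamma Lj (fun p : gammaV => (val p).2) (fun ee : gammaE => (val ee).2).
End EdgeGluing.

Definition hyperedge_gluing (Li Lj S : hypergraph) (M : {set (hE Li * hE Lj)})
  (eps : hom (hsum Li Lj) S) : Prop :=
  edge_gluing_cond M /\
  is_coequalizer (hcomp (gamma_p1 M) (iota1 Li Lj)) (hcomp (gamma_p2 M) (iota2 Li Lj)) eps.

Section NodeGluing.
Variables (Li Lj S : hypergraph) (eps : hom (hsum Li Lj) S) (N : {set (hV S * hV S)}).

Definition I1 : pred (hV S) := fun v =>
  (indeg v == 0) && [exists x : hV Li, (indeg x == 0) && (mV eps (inl x) == v)].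
Definition I2 : pred (hV S) := fun v =>
  (indeg v == 0) && [exists x : hV Lj, (indeg x == 0) && (mV eps (inr x) == v)].
Definition O1 : pred (hV S) := fun v =>
  (outdeg v == 0) && [exists x : hV Li, (outdeg x == 0) && (mV eps (inl x) == v)].
Definition O2 : pred (hV S) := fun v =>
  (outdeg v == 0) && [exists x : hV Lj, (outdeg x == 0) && (mV eps (inr x) == v)].

Definition node_gluing_cond : Prop :=
  (forall pr, pr \in N -> (I1 pr.1 && O2 pr.2) || (I2 pr.1 && O1 pr.2)) /\
  (forall pr pr', pr \in N -> pr' \in N ->
     [|| pr.1 == pr'.1, pr.1 == pr'.2, pr.2 == pr'.1 | pr.2 == pr'.2] -> pr = pr').

Definition gamma' : hypergraph := disc {pr : hV S * hV S | pr \in N}.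
Definition gamma'_p1 : hom gamma' S :=
  @Hom gamma' S (fun pr : {pr : hV S * hV S | pr \in N} => (val pr).1) (fun e : void => of_void _ e).
Definition gamma'_p2 : hom gamma' S :=
  @Hom gamma' S (fun pr : {pr : hV S * hV S | pr \in N} => (val pr).2) (fun e : void => of_void _ e).
End NodeGluing.

Definition node_gluing (Li Lj S S' : hypergraph) (eps : hom (hsum Li Lj) S)
  (N : {set (hV S * hV S)}) (eps' : hom S S') : Prop :=
  node_gluing_cond eps N /\ is_coequalizer (gamma'_p1 N) (gamma'_p2 N) eps'.

Definition yields_critical_pair (ri rj : rule) (S S' : hypergraph)
  (eps : hom (hsum (rL ri) (rL rj)) S) (eps' : hom S S') : Prop :=
  let m1 := hcomp (hcomp (iota1 (rL ri) (rL rj)) eps) eps' in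
  let m2 := hcomp (hcomp (iota2 (rL ri) (rL rj)) eps) eps' in
  mono m1 /\ mono m2 /\ ma_cospan (incl_in S') (incl_out S') /\
  exists (d1 : derivation (incl_in S') (incl_out S') ri m1)
         (d2 : derivation (incl_in S') (incl_out S') rj m2),
    critical d1 d2.

End Hyp.

(* Let m : L -> G be injective on nodes, with L strongly connected and G
   monogamous acyclic.  A path of G starting at the image of an output of L can
   never reach the image of L again: the edge by which it re-enters would, by
   monogamy, have to enter at the image of an input y of L, and a path of L from
   y back to that output closes a cycle.  Hence, by monogamy at each step, a path
   between image nodes stays inside the image, i.e. m is convex.  So it suffices
   that m;eps' is still mono.  The node gluing identifies no hyperedges, and only
   the two nodes of a pair of N, an input and an output; were m x and m y such a
   pair, x would be an input and y an output of L, and the image in S' of a path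
   of L from x to y would be a cycle. *)

From mathcomp Require Import ssreflect ssrfun ssrbool eqtype ssrnat seq path choice fintype finfun bigop finset.
Set Implicit Arguments. Unset Strict Implicit. Unset Printing Implicit Defensive.

Section Incidence.
Variables (I : finType) (T : eqType) (s : I -> seq T).

Lemma incidence_eq0 v : (\sum_i count (pred1 v) (s i) == 0) = [forall i, v \notin s i].
Proof. by rewrite sum_nat_eq0; apply: eq_forallb => i; apply/eqP/count_memPn. Qed.

Lemma incidence_le1_uniq v i j :
  \sum_k count (pred1 v) (s k) <= 1 -> v \in s i -> v \in s j -> i = j.
Proof.
move=> le1 v_i v_j; apply/eqP; apply: contraTT le1 => neq_ij.
have count_gt0 k : v \in s k -> 0 < count (pred1 v) (s k) by rewrite -has_count has_pred1.
rewrite -ltnNge (bigD1 i) //= (bigD1 j) 1?eq_sym //= addnA.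
exact: leq_trans (leq_add (count_gt0 _ v_i) (count_gt0 _ v_j)) (leq_addr _ _).
Qed.

End Incidence.

Section Hypergraphs.
Variable Sg : signature.
Implicit Types (G H K L : hypergraph Sg).

Lemma indeg_eq0 G (v : hV G) : (indeg v == 0) = [forall e, v \notin htgt e].
Proof. exact: incidence_eq0. Qed.

Lemma outdeg_eq0 G (v : hV G) : (outdeg v == 0) = [forall e, v \notin hsrc e].
Proof. exact: incidence_eq0. Qed.

Lemma indeg_le1_uniq G (v : hV G) e1 e2 :
  indeg v <= 1 -> v \in htgt e1 -> v \in htgt e2 -> e1 = e2.
Proof. exact: incidence_le1_uniq. Qed.

Lemma outdeg_le1_uniq G (v : hV G) e1 e2 :
  outdeg v <= 1 -> v \in hsrc e1 -> v \in hsrc e2 -> e1 = e2.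
Proof. exact: incidence_le1_uniq. Qed.

Lemma is_hom_comp G H K (f : hom G H) (g : hom H K) :
  is_hom f -> is_hom g -> is_hom (hcomp f g).
Proof.
move=> [f_src [f_tgt f_lab]] [g_src [g_tgt g_lab]].
by split; [|split] => e /=; rewrite ?g_src ?f_src ?g_tgt ?f_tgt -?map_comp ?g_lab.
Qed.

Section HomIncidence.
Variables (G H : hypergraph Sg) (f : hom G H).
Hypothesis hom_f : is_hom f.

Lemma hom_mem_src v e : v \in hsrc e -> mV f v \in hsrc (mE f e).
Proof. by case: hom_f => -> _; apply: map_f. Qed.

Lemma hom_mem_tgt v e : v \in htgt e -> mV f v \in htgt (mE f e).
Proof. by case: hom_f => _ [-> _]; apply: map_f. Qed.

Lemma hom_indeg_eq0 v : indeg (mV f v) = 0 -> indeg v = 0.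
Proof.
move/eqP; rewrite indeg_eq0 => /forallP not_tgt.
apply/eqP; rewrite indeg_eq0; apply/forallP => e.
exact/contra/(not_tgt (mE f e))/hom_mem_tgt.
Qed.

Lemma hom_outdeg_eq0 v : outdeg (mV f v) = 0 -> outdeg v = 0.
Proof.
move/eqP; rewrite outdeg_eq0 => /forallP not_src.
apply/eqP; rewrite outdeg_eq0; apply/forallP => e.
exact/contra/(not_src (mE f e))/hom_mem_src.
Qed.

Lemma path_from_to_map v v' p :
  path_from_to v v' p -> path_from_to (mV f v) (mV f v') (map (mE f) p).
Proof.
case: p => [|e p] //= /and3P [linked_p v_e v'_last]; apply/and3P; split.
- apply: homo_path linked_p => a b /hasP [c c_a c_b].
  by apply/hasP; exists (mV f c); [apply: hom_mem_tgt | apply: hom_mem_src].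
- exact: hom_mem_src.
- by rewrite last_map; apply: hom_mem_tgt.
Qed.

End HomIncidence.

Lemma path_from_to_cat G (a b c : hV G) p q :
  path_from_to a b p -> path_from_to b c q -> path_from_to a c (p ++ q).
Proof.
case: p => [|e p] //; case: q => [|e' q] //= /and3P [p_linked a_e b_last].
move=> /and3P [q_linked b_e' c_last].
rewrite cat_path last_cat /= p_linked q_linked a_e c_last !andbT.
by apply/hasP; exists b.
Qed.

Lemma path_from_to_cons_inv G (a b : hV G) e p : path_from_to a b (e :: p) ->
  a \in hsrc e /\
  ((p = [::] /\ b \in htgt e) \/ exists2 c, c \in htgt e & path_from_to c b p).
Proof.
case: p => [|e' p] /=; first by move=> /andP [-> ->]; split=> //; left.
move=> /and3P [/andP [/hasP [c c_e c_e'] p_linked] a_e b_last]; split=> //; right.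
by exists c => //=; rewrite p_linked c_e'.
Qed.

Lemma path_from_to_rcons_inv G (a b : hV G) p e : path_from_to a b (rcons p e) ->
  b \in htgt e /\
  ((p = [::] /\ a \in hsrc e) \/ exists2 c, path_from_to a c p & c \in hsrc e).
Proof.
case: p => [|e0 p] /=; first by move=> /andP [-> ->]; split=> //; left.
rewrite rcons_path last_rcons => /and3P [/andP [p_linked /hasP [c c_last c_e]] a_e0 b_e].
by split=> //; right; exists c => //=; rewrite p_linked a_e0.
Qed.

Lemma ma_no_loop G : ma G -> forall (v : hV G) p, ~~ path_from_to v v p.
Proof.
case=> acyclic _ v; case => [|e p] //=; apply: contra (acyclic (e :: p)).
by case/and3P => p_linked v_e v_last; rewrite /= p_linked; apply/hasP; exists v.
Qed.

Lemma strongly_connected_in_out_neq L G (k : hom L G) x y :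
  is_hom k -> strongly_connected L -> ma G -> indeg x = 0 -> outdeg y = 0 ->
  mV k x != mV k y.
Proof.
move=> hom_k sc_L ma_G in_x out_y; apply/eqP => kx_ky.
have [p p_xy] := sc_L x y in_x out_y.
by have := ma_no_loop ma_G (mV k x) (map (mE k) p); rewrite {2}kx_ky path_from_to_map.
Qed.

Section StronglyConnectedConvex.
Variables (L G : hypergraph Sg) (m : hom L G).
Hypotheses (hom_m : is_hom m) (inj_m : injective (mV m)).
Hypotheses (sc_L : strongly_connected L) (ma_G : ma G).

Lemma no_path_from_output w y p : outdeg w = 0 -> ~~ path_from_to (mV m w) (mV m y) p.
Proof.
move=> out_w; elim/last_ind: p y => [//|p e IHp] y; apply/negP => path_wy.
have [y_e prev] := path_from_to_rcons_inv path_wy.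
case: (boolP [exists d, mE m d == e]) => [/existsP [d /eqP e_d]|/existsPn not_img].
- have [m_src _] := hom_m; rewrite -e_d m_src in prev.
  case: prev => [[_ /mapP [w' w'_d /inj_m w_w']]|[c path_c /mapP [t _ c_t]]].
  + by move/eqP: out_w; rewrite outdeg_eq0 => /forallP /(_ d); rewrite w_w' w'_d.
  + by move: path_c; rewrite c_t; apply/negP/IHp.
- case: (boolP (indeg y == 0)) => [/eqP in_y|].
    have [q path_yw] := sc_L in_y out_w.
    exact: (negP (ma_no_loop ma_G _ _)) (path_from_to_cat path_wy (path_from_to_map hom_m path_yw)).
  rewrite indeg_eq0 => /forallPn [d /negPn y_d].
  have [_ /(_ (mV m y)) [indeg_y _]] := ma_G.
  by have := not_img d; rewrite (indeg_le1_uniq indeg_y y_e (hom_mem_tgt hom_m y_d)) eqxx.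
Qed.

Lemma path_from_image_in_image x y p :
  path_from_to (mV m x) (mV m y) p -> {subset p <= codom (mE m)}.
Proof.
elim: p x => [//|e p IHp] x path_xy.
have [x_e next] := path_from_to_cons_inv path_xy.
have /forallPn [d /negPn x_d] : ~~ [forall d, x \notin hsrc d].
  by rewrite -outdeg_eq0; apply: contraL path_xy => /eqP; apply: no_path_from_output.
have [_ /(_ (mV m x)) [_ outdeg_x]] := ma_G.
have e_d := outdeg_le1_uniq outdeg_x x_e (hom_mem_src hom_m x_d).
move=> e'; rewrite inE => /predU1P [-> | e'_p]; first by rewrite e_d codom_f.
case: next => [[p_nil _]|[c c_e path_c]]; first by rewrite p_nil in e'_p.
have [_ [m_tgt _]] := hom_m; move: c_e; rewrite e_d m_tgt => /mapP [t _ c_t].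
by rewrite c_t in path_c; apply: IHp path_c _ e'_p.
Qed.

End StronglyConnectedConvex.

Lemma strongly_connected_convex_match L G (m : hom L G) :
  is_hom m -> mono m -> strongly_connected L -> ma G -> convex_match m.
Proof.
move=> hom_m mono_m sc_L ma_G; split=> //; split=> // v v' p [x <-] [y <-] path_xy e e_p.
have /codomP [d ->] := path_from_image_in_image hom_m mono_m.1 sc_L ma_G path_xy e_p.
by exists d.
Qed.

Section NodeGluing.
Variables (Li Lj S S' : hypergraph Sg) (eps : hom (hsum Li Lj) S).
Variables (N : {set hV S * hV S}) (eps' : hom S S').
Hypotheses (wf_S : wf_hg S) (glue : node_gluing eps N eps').

(* Sending the second node of each pair of N to the first one yields a cocone
   of the node gluing that identifies nothing else, because the pairs of N are
   disjoint; factoring eps' through it bounds what eps' identifies. *)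
Definition partner (v : hV S) : hV S :=
  if [pick pr in N | pr.2 == v] is Some pr then pr.1 else v.

Definition merged : hypergraph Sg :=
  @Hypergraph Sg (hV S) (hE S)
    (fun e => map partner (hsrc e)) (fun e => map partner (htgt e)) (@hlab Sg S).

Definition merge : hom S merged := @Hom Sg S merged partner id.

Lemma wf_merged : wf_hg merged.
Proof. by move=> e; rewrite /= !size_map; apply: wf_S. Qed.

Lemma is_hom_merge : is_hom merge.
Proof. by split; [|split]. Qed.

Lemma partner_glued pr : pr \in N -> partner pr.1 = pr.1 /\ partner pr.2 = pr.1.
Proof.
have [[_ disjoint] _] := glue.
move=> pr_N; split; rewrite /partner; case: pickP => [pr' /andP [pr'_N /eqP pr'_v]|no_pr] //.
- by have -> // : pr' = pr by apply: disjoint; rewrite // pr'_v eqxx !orbT.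
- by have -> // : pr' = pr by apply: disjoint; rewrite // pr'_v eqxx !orbT.
- by have := no_pr pr; rewrite pr_N eqxx.
Qed.

Lemma merge_coequalizes : homeq (hcomp (gamma'_p1 N) merge) (hcomp (gamma'_p2 N) merge).
Proof. by split=> [[pr pr_N]|[]] /=; case: (partner_glued pr_N) => -> ->. Qed.

Lemma merge_factors : exists u : hom S' merged, homeq (hcomp eps' u) merge.
Proof.
have [_ [_ [_ universal]]] := glue.
have [u [_ [eps'_u _]]] := universal _ wf_merged _ is_hom_merge merge_coequalizes.
by exists u.
Qed.

Lemma node_gluing_injE : injective (mE eps').
Proof.
have [u [_ u_E]] := merge_factors.
by move=> e1 e2 eq_e; have := u_E e1; have := u_E e2; rewrite /= eq_e => ->.
Qed.

Lemma node_gluing_identified a b :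
  mV eps' a = mV eps' b -> [\/ a = b, (a, b) \in N | (b, a) \in N].
Proof.
have [[_ disjoint] _] := glue; have [u [u_V _]] := merge_factors.
move=> eq_ab; have : partner a = partner b by move: (u_V a) (u_V b) => /= <- <-; rewrite eq_ab.
rewrite /partner; case: pickP => [[a1 a2] /andP [a_N /eqP /= a2_a]|_];
  case: pickP => [[b1 b2] /andP [b_N /eqP /= b2_b]|_] /= eq_partner.
- have [_ eq_2] : (a1, a2) = (b1, b2) by apply: disjoint; rewrite //= eq_partner eqxx.
  by apply: Or31; rewrite -a2_a -b2_b eq_2.
- by apply: Or33; rewrite -eq_partner -a2_a.
- by apply: Or32; rewrite eq_partner -b2_b.
- exact: Or31.
Qed.

Lemma node_gluing_glued pr : pr \in N -> mV eps' pr.1 = mV eps' pr.2.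
Proof. by have [_ [_ [[glued _] _]]] := glue; move=> pr_N; apply: (glued (exist _ pr pr_N)). Qed.

Lemma node_gluing_in_out pr : pr \in N -> indeg pr.1 = 0 /\ outdeg pr.2 = 0.
Proof.
have [[in_out _] _] := glue; move/in_out; rewrite /I1 /I2 /O1 /O2.
by case/orP => /andP [/andP [/eqP -> _] /andP [/eqP -> _]].
Qed.

Lemma node_gluing_mono L (m : hom L S) :
  is_hom m -> mono m -> strongly_connected L -> ma S' -> mono (hcomp m eps').
Proof.
have [_ [hom_eps' _]] := glue.
move=> hom_m [inj_mV inj_mE] sc_L ma_S'; split; last exact: inj_comp node_gluing_injE inj_mE.
have not_glued x y : (mV m x, mV m y) \notin N.
  apply/negP => xy_N; have [/(hom_indeg_eq0 hom_m) in_x /(hom_outdeg_eq0 hom_m) out_y] :=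
    node_gluing_in_out xy_N.
  have := strongly_connected_in_out_neq (is_hom_comp hom_m hom_eps') sc_L ma_S' in_x out_y.
  by rewrite /= (node_gluing_glued xy_N) eqxx.
move=> x y /= eq_xy; case: (node_gluing_identified eq_xy) => [/inj_mV //|xy_N|yx_N].
- by have := not_glued x y; rewrite xy_N.
- by have := not_glued y x; rewrite yx_N.
Qed.

End NodeGluing.

End Hypergraphs.

Theorem mainTheorem9 (Sg : signature) (Rs : seq (rule Sg)) (ri rj : rule Sg)
  (M : {set (hE (rL ri) * hE (rL rj))})
  (S : hypergraph Sg) (eps : hom (hsum (rL ri) (rL rj)) S)
  (N : {set (hV S * hV S)}) (S' : hypergraph Sg) (eps' : hom S S') :
  left_connected_system Rs -> List.In ri Rs -> List.In rj Rs ->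
  wf_hg S -> wf_hg S' ->
  hyperedge_gluing M eps ->
  node_gluing eps N eps' ->
  yields_critical_pair eps eps' ->
  forall (r : rule Sg) (m : hom (rL r) S),
    List.In r Rs -> convex_match m -> convex_match (hcomp m eps').
Proof.
move=> system _ _ wf_S _ _ glue critical r m r_Rs [hom_m [mono_m _]].
have [_ [_ [[_ [_ [ma_S' _]]] _]]] := critical.
have [_ [_ [_ [_ [_ [_ [_ [_ [_ sc_L]]]]]]]]] := system r r_Rs.
have [_ [hom_eps' _]] := glue.
apply: (strongly_connected_convex_match _ _ sc_L ma_S').
- exact: is_hom_comp hom_m hom_eps'.
- exact: (node_gluing_mono wf_S glue hom_m mono_m sc_L ma_S').
Qed.
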